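(* Given a set cover instance with ground set $E$ ($|E|=n$) and sets $X_1,\dots,X_m$ with $\bigcup_i X_i=E$, let $I$ be the 2-D Euclidean g2g-anycast instance constructed from it as described in the context. If an optimal solution of $I$ has cost $C$, then the set cover instance has a cover using at most $C/2$ sets.
   Context: In 2-D Euclidean g2g-anycast ($\kappa=2$), the nodes are points in $\mathbb{R}^2$, there is a source group $S$ and destination groups with demands $(S,T)$, and broadcast and funnel costs are both $\|u-v\|^2$. A solution assigns to each $s\in S$ a radius $\rho_s\ge0$, a set $A_s$ of nodes with $\|s-t\|^2\le\rho_s$ for $t\in A_s$, and a tree $H_s$ on nodes containing $\{s\}\cup A_s$. It is feasible if every destination group meets some $A_s$. Its cost is $\sum_s\rho_s+\sum_s\sum_{uv\in H_s}\|u-v\|^2$. Construction of $I$: - Choose points $x_1,\dots,x_m\in\mathbb{R}^2$ with pairwise distances at least $D$, where $(D-2)^2>2m$. - For each $i$, choose a point $y_i$ with $\|x_i-y_i\|=1$. - The source group is $S=\{x_1,\dots,x_m\}$. - For each element $e\in E$, the destination group $T_e$ consists of one terminal node $t(e)_i$ located at $y_i$ for each $i$ with $e\in X_i$. - The demands are $(S,T_e)$ for all $e\in E$. *)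

From HB Require Import structures.
From mathcomp Require Import all_boot all_order all_algebra.
Set Implicit Arguments. Unset Strict Implicit. Unset Printing Implicit Defensive.
Import Order.TTheory GRing.Theory Num.Theory.
Local Open Scope ring_scope.

Definition pt (R : rcfType) := (R * R)%type.
Definition sqdist (R : rcfType) (p q : pt R) : R :=
  (p.1 - q.1) ^+ 2 + (p.2 - q.2) ^+ 2.
Definition dist (R : rcfType) (p q : pt R) : R := Num.sqrt (sqdist p q).

Section Instance.
Variables (E : finType) (m : nat) (X : 'I_m -> {set E}).

(* terminal nodes t(e)_i, one for each pair (e,i) with e \in X_i *)
Definition term_idx := {p : E * 'I_m | p.1 \in X p.2}.
(* the nodes of I: sources x_i (inl i) and terminals t(e)_i (inr _) *)
Definition node := ('I_m + term_idx)%type.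
Definition src (i : 'I_m) : node := inl i.
Definition in_group (e : E) (t : node) : bool :=
  match t with inr p => (val p).1 == e | inl _ => false end.

Variables (R : rcfType) (x y : 'I_m -> pt R).

Definition pos (v : node) : pt R :=
  match v with inl i => x i | inr p => y (val p).2 end.
Definition ncost (u v : node) : R := (dist (pos u) (pos v)) ^+ 2.

(* Undirected edges {u,v} are encoded as ordered pairs (u,v) with
   enum_rank u < enum_rank v (canonical orientation). *)
Definition adj (F : {set node * node}) : rel node :=
  fun u v => ((u, v) \in F) || ((v, u) \in F).

Definition is_tree (V : {set node}) (F : {set node * node}) : Prop :=
  [/\ V != set0,
      {in F, forall p : node * node,
          [/\ p.1 \in V, p.2 \in V & (enum_rank p.1 < enum_rank p.2)%N]},
      {in V &, forall u v, connect (adj F) u v}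
    & #|F| = #|V|.-1].

Definition valid_sol (rho : 'I_m -> R) (A V : 'I_m -> {set node})
    (F : 'I_m -> {set node * node}) : Prop :=
  forall s : 'I_m,
    [/\ 0 <= rho s,
        {in A s, forall t, ncost (src s) t <= rho s},
        src s \in V s,
        A s \subset V s
      & is_tree (V s) (F s)].

Definition feasible (A : 'I_m -> {set node}) : Prop :=
  forall e : E, exists s : 'I_m, exists2 t, t \in A s & in_group e t.

Definition sol_cost (rho : 'I_m -> R) (F : 'I_m -> {set node * node}) : R :=
  \sum_(s < m) rho s + \sum_(s < m) \sum_(p in F s) ncost p.1 p.2.

End Instance.

From HB Require Import structures.
From mathcomp Require Import all_boot all_order all_algebra.
From mathcomp Require Import ring lra.
Set Implicit Arguments. Unset Strict Implicit.
Import Order.TTheory GRing.Theory Num.Theory.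
Local Open Scope ring_scope.

(* The sources are pairwise far apart and each y_i is at distance 1 from x_i.
   Hence a source whose set A_s contains a terminal t(e)_i with i <> s pays a
   radius above 2m, already more than 2 per set of the trivial cover by all
   sets.  Otherwise every source only serves terminals at its own y_s, the
   sources serving some terminal form a cover, and each of them pays a radius
   at least 1 plus at least 1 for the tree edge leaving x_s (every other node
   is at squared distance at least 1 from x_s). *)

Section PlaneDistance.
Variable R : rcfType.
Implicit Types p q r : pt R.

Lemma sqdist_ge0 p q : 0 <= sqdist p q.
Proof. by rewrite /sqdist addr_ge0 // sqr_ge0. Qed.

Lemma dist_ge0 p q : 0 <= dist p q.
Proof. exact: sqrtr_ge0. Qed.

Lemma sqr_dist p q : dist p q ^+ 2 = sqdist p q.
Proof. by rewrite /dist sqr_sqrtr // sqdist_ge0. Qed.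

Lemma distC p q : dist p q = dist q p.
Proof. by rewrite /dist /sqdist; congr Num.sqrt; ring. Qed.

Lemma dist_triangle p q r : dist p r <= dist p q + dist q r.
Proof.
set a1 := p.1 - q.1; set a2 := p.2 - q.2; set b1 := q.1 - r.1; set b2 := q.2 - r.2.
have sqdist_pr : sqdist p r = sqdist p q + sqdist q r + 2 * (a1 * b1 + a2 * b2).
  by rewrite /sqdist /a1 /a2 /b1 /b2; ring.
have cauchy_schwarz : a1 * b1 + a2 * b2 <= dist p q * dist q r.
  rewrite /dist -sqrtrM ?sqdist_ge0 //; apply: le_trans (ler_norm _) _.
  rewrite -sqrtr_sqr ler_sqrt ?mulr_ge0 ?sqdist_ge0 //.
  have -> : sqdist p q * sqdist q r = (a1 * b1 + a2 * b2) ^+ 2 + (a1 * b2 - a2 * b1) ^+ 2.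
    by rewrite /sqdist /a1 /a2 /b1 /b2; ring.
  by rewrite lerDl sqr_ge0.
have dpq := dist_ge0 p q; have dqr := dist_ge0 q r.
have sq_le : sqdist p r <= (dist p q + dist q r) ^+ 2.
  by rewrite sqdist_pr -!sqr_dist; nra.
by rewrite -(ger0_norm (addr_ge0 dpq dqr)) -sqrtr_sqr ler_sqrt ?sqr_ge0.
Qed.

End PlaneDistance.

Lemma card_ord_ge2 (m : nat) (i j : 'I_m) : i != j -> (2 <= m)%N.
Proof. by move=> ij; have := max_card [set i; j]; rewrite cards2 ij card_ord. Qed.

Lemma ler_sum_term (R : numDomainType) (I : finType) (A : {pred I}) (f : I -> R) a :
  {in A, forall b, 0 <= f b} -> a \in A -> f a <= \sum_(b in A) f b.
Proof. by move=> f_ge0 Aa; rewrite (bigD1 a) //= lerDl sumr_ge0 // => b /andP [/f_ge0]. Qed.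

Lemma is_tree_adj_neq (E : finType) (m : nat) (X : 'I_m -> {set E})
    (V : {set node X}) (F : {set node X * node X}) (u v : node X) :
  is_tree V F -> u \in V -> v \in V -> u != v -> exists2 w, w != u & adj F u w.
Proof.
case=> _ F_ord conn _ uV vV uv.
case/connectP: (conn _ _ uV vV) => [[|w p]] /=; first by move=> _ vu; rewrite vu eqxx in uv.
case/andP => uw _ _; exists w => //.
by apply/eqP=> wu; move: uw; rewrite wu /adj orbb => /F_ord [_ _]; rewrite ltnn.
Qed.

Section Instance.
Variables (E : finType) (m : nat) (X : 'I_m -> {set E}).
Variables (R : rcfType) (D : R) (x y : 'I_m -> pt R).
Hypothesis D_ge0 : 0 <= D.
Hypothesis sep : forall i j : 'I_m, i != j -> D <= dist (x i) (x j).
Hypothesis D_large : 2 * m%:R < (D - 2) ^+ 2.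
Hypothesis dist_xy : forall i : 'I_m, dist (x i) (y i) = 1.

(* [lra] and [nra] ignore section hypotheses, hence the [have := ...] copies. *)

Local Notation node := (node X).
Local Notation ncost := (ncost x y).

Lemma ncost_ge0 (u v : node) : 0 <= ncost u v.
Proof. exact: sqr_ge0. Qed.

Lemma ncostC (u v : node) : ncost u v = ncost v u.
Proof. by rewrite /ncost distC. Qed.

Lemma sep_ge2 (i j : 'I_m) : i != j -> 2 <= D.
Proof.
move=> /card_ord_ge2 m_ge2.
have : 2%:R <= m%:R :> R by rewrite ler_nat.
by have := D_ge0; have := D_large; nra.
Qed.

Lemma dist_x_far_y (s i : 'I_m) : i != s -> D - 1 <= dist (x s) (y i).
Proof.
move=> si; have is_ : s != i by rewrite eq_sym.
have := dist_triangle (x s) (y i) (x i); rewrite [dist (y i) _]distC dist_xy.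
by have := sep is_; lra.
Qed.

Lemma sqr_dist_x_far_y (s i : 'I_m) : i != s -> 2 * m%:R < dist (x s) (y i) ^+ 2.
Proof.
move=> si; have D2 := sep_ge2 si; have far := dist_x_far_y si.
by have := D_large; nra.
Qed.

Lemma ncost_src_ge1 (s : 'I_m) (v : node) : v != src X s -> 1 <= ncost (src X s) v.
Proof.
case: v => [j | t] neq; rewrite /ncost /=.
- have js : j != s by apply: contra neq => /eqP ->.
  have sj : s != j by rewrite eq_sym.
  by have D2 := sep_ge2 js; have := sep sj; nra.
- have [-> | ts] := eqVneq (val t).2 s; first by rewrite dist_xy expr1n.
  have D2 := sep_ge2 ts; have far := dist_x_far_y ts.
  by nra.
Qed.

Lemma tree_cost_ge1 (s : 'I_m) (V : {set node}) (F : {set node * node}) (v : node) :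
  is_tree V F -> src X s \in V -> v \in V -> v != src X s ->
  1 <= \sum_(p in F) ncost p.1 p.2.
Proof.
move=> tree sV vV vs.
have sv : src X s != v by rewrite eq_sym.
have [w ws] := is_tree_adj_neq tree sV vV sv.
have w_cost := ncost_src_ge1 ws.
have cost_ge0 : {in F, forall p : node * node, 0 <= ncost p.1 p.2} by move=> p _; apply: ncost_ge0.
case/orP=> edge; apply: le_trans (ler_sum_term cost_ge0 edge) => //=.
by rewrite ncostC.
Qed.

Section Solution.
Variables (rho : 'I_m -> R) (A V : 'I_m -> {set node}) (F : 'I_m -> {set node * node}).
Hypothesis valid : valid_sol x y rho A V F.

Definition src_cost (s : 'I_m) : R := rho s + \sum_(p in F s) ncost p.1 p.2.

Lemma sol_costE : sol_cost x y rho F = \sum_s src_cost s.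
Proof. by rewrite /sol_cost big_split. Qed.

Lemma src_cost_ge0 (s : 'I_m) : 0 <= src_cost s.
Proof.
by case: (valid s) => rho_ge0 _ _ _ _; rewrite addr_ge0 // sumr_ge0 // => p _; apply: ncost_ge0.
Qed.

Lemma src_cost_le_sol_cost (s : 'I_m) : src_cost s <= sol_cost x y rho F.
Proof. by rewrite sol_costE; apply: ler_sum_term => // b _; apply: src_cost_ge0. Qed.

Lemma misrouted_sol_cost_gt (s : 'I_m) (t : term_idx X) :
  inr t \in A s -> (val t).2 != s -> 2 * m%:R < sol_cost x y rho F.
Proof.
move=> tAs ts; have far := sqr_dist_x_far_y ts.
case: (valid s) => _ /(_ _ tAs) rho_large _ _ _.
have tree_ge0 : 0 <= \sum_(p in F s) ncost p.1 p.2 by rewrite sumr_ge0 // => p _; apply: ncost_ge0.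
have := src_cost_le_sol_cost s; rewrite /src_cost /ncost /= in rho_large *.
by lra.
Qed.

Lemma serving_src_cost_ge2 (s : 'I_m) (t : term_idx X) :
  inr t \in A s -> (val t).2 = s -> 2 <= src_cost s.
Proof.
move=> tAs ts; case: (valid s) => _ /(_ _ tAs) rho_ge1 sV /subsetP AV tree.
rewrite /ncost /= ts dist_xy expr1n in rho_ge1.
have t_src : inr t != src X s by [].
have := tree_cost_ge1 tree sV (AV _ tAs) t_src.
by rewrite /src_cost; lra.
Qed.

Definition served : {set 'I_m} := [set s | [exists t : term_idx X, inr t \in A s]].

Hypothesis local : forall s (t : term_idx X), inr t \in A s -> (val t).2 = s.

Lemma served_cover : feasible A -> \bigcup_(i in served) X i = [set: E].
Proof.
move=> feas; apply/setP => e; rewrite in_setT; apply/bigcupP.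
case: (feas e) => s [[// | t] tAs /eqP te].
exists s; first by rewrite inE; apply/existsP; exists t.
by have := valP t; rewrite te (local tAs).
Qed.

Lemma sol_cost_ge_served : 2 * #|served|%:R <= sol_cost x y rho F.
Proof.
rewrite sol_costE (bigID (mem served)) /= mulr_natr -sumr_const -[leLHS]addr0.
apply: lerD; last by rewrite sumr_ge0 // => s _; apply: src_cost_ge0.
apply: ler_sum => s; rewrite inE => /existsP [t tAs].
exact: serving_src_cost_ge2 tAs (local tAs).
Qed.

End Solution.
End Instance.

Theorem mainTheorem11 (R : rcfType) (E : finType) (m : nat)
    (X : 'I_m -> {set E})
    (hcover : \bigcup_(i < m) X i = [set: E])
    (D : R) (x y : 'I_m -> pt R)
    (hD0 : 0 <= D)
    (hsep : forall i j : 'I_m, i != j -> D <= dist (x i) (x j))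
    (hD : 2 * m%:R < (D - 2) ^+ 2)
    (hy : forall i : 'I_m, dist (x i) (y i) = 1)
    (C : R)
    (rho : 'I_m -> R) (A V : 'I_m -> {set node X})
    (F : 'I_m -> {set node X * node X})
    (hvalid : valid_sol x y rho A V F)
    (hfeas : feasible A)
    (hcost : sol_cost x y rho F = C)
    (hopt : forall (rho' : 'I_m -> R) (A' V' : 'I_m -> {set node X})
              (F' : 'I_m -> {set node X * node X}),
              valid_sol x y rho' A' V' F' -> feasible A' ->
              C <= sol_cost x y rho' F') :
  exists J : {set 'I_m},
    \bigcup_(i in J) X i = [set: E] /\ (#|J|%:R <= C / 2).
Proof.
have [local | /forallPn [s /forallPn [t]]] :=
  boolP [forall s, forall t : term_idx X, (inr t \in A s) ==> ((val t).2 == s)].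
- have {}local s (t : term_idx X) : inr t \in A s -> (val t).2 = s.
    by move=> tAs; apply/eqP; exact: implyP (forallP (forallP local s) t) tAs.
  exists (served A); split; first exact: served_cover.
  by have := sol_cost_ge_served hD0 hsep hD hy hvalid local; rewrite hcost; lra.
- rewrite negb_imply => /andP [tAs ts].
  exists setT; split; first by rewrite -hcover; apply: eq_bigl => i; rewrite in_setT.
  rewrite cardsT card_ord.
  by have := misrouted_sol_cost_gt hD0 hsep hD hy hvalid tAs ts; rewrite hcost; lra.
Qed.
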